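(* Let $X$ be a $T_1$ topological space. An ideal $I$ of $T''(X)$ is a $z$-ideal if and only if for all $f\in T''(X)$ and $g\in I$ with $Z(f)=Z(g)$ we have $f\in I$.
   Context: $C(X)$ is the ring of real-valued continuous functions on $X$; a cozero set is a set $\{x: g(x)\neq 0\}$ with $g\in C(X)$. $T''(X)$ is the ring (under pointwise operations) of all functions $f\colon X\to\mathbb{R}$ for which there is a dense cozero set $U$ of $X$ with $f|_U$ continuous. For any $f\colon X\to\mathbb{R}$, $Z(f)=\{x\in X: f(x)=0\}$. In a commutative ring $R$ with unity, $M(a)$ denotes the intersection of all maximal ideals of $R$ containing $a$, and an ideal $I$ is a $z$-ideal if $M(a)\subseteq I$ for every $a\in I$. *)

From HB Require Import structures.
From mathcomp Require Import all_boot all_order all_algebra.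
From mathcomp Require Import all_classical all_reals all_analysis.
Set Implicit Arguments. Unset Strict Implicit. Unset Printing Implicit Defensive.
Import Order.TTheory GRing.Theory Num.Theory.
Import numFieldNormedType.Exports.
Local Open Scope classical_set_scope.
Local Open Scope ring_scope.

Definition cozero_set (R : realType) (X : topologicalType) (U : set X) : Prop :=
  exists g : X -> R, continuous g /\ U = [set x | g x != 0].
Arguments cozero_set : clear implicits.

Definition Tpp (R : realType) (X : topologicalType) : set (X -> R) :=
  [set f | exists U : set X, cozero_set R X U /\ dense U /\ {within U, continuous f}].

Arguments Tpp : clear implicits.

Definition Zset (R : realType) (X : Type) (f : X -> R) : set X :=
  [set x | f x = 0].

Definition is_ideal (R : realType) (X : topologicalType) (I : set (X -> R)) : Prop :=
  [/\ I `<=` Tpp R X,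
      I (fun _ => 0),
      (forall f g, I f -> I g -> I (fun x => f x - g x)) &
      (forall f g, Tpp R X f -> I g -> I (fun x => f x * g x))].

Definition maximal_ideal (R : realType) (X : topologicalType) (M : set (X -> R)) : Prop :=
  [/\ is_ideal M, M <> Tpp R X &
      (forall J, is_ideal J -> M `<=` J -> J = M \/ J = Tpp R X)].

(* M(a): intersection of all maximal ideals of T''(X) containing a
   (the whole ring T''(X) if there is none). *)
Definition Mset (R : realType) (X : topologicalType) (a : X -> R) : set (X -> R) :=
  [set f | Tpp R X f /\ forall M, maximal_ideal M -> M a -> M f].

Definition z_ideal (R : realType) (X : topologicalType) (I : set (X -> R)) : Prop :=
  forall a, I a -> Mset a `<=` I.

From HB Require Import structures.
From mathcomp Require Import all_boot all_order all_algebra.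
From mathcomp Require Import all_classical all_reals all_analysis.
Local Open Scope classical_set_scope.
Local Open Scope ring_scope.
Import Order.TTheory GRing.Theory Num.Theory.
Import numFieldNormedType.Exports.

(* M(a) is exactly the set of f in T''(X) vanishing on Z(a).  If Z(a) is
   contained in Z(f) and a maximal ideal M contains a but not f, then
   1 = m + r f with m in M; the element m^2 + a^2 of M vanishes nowhere
   (where a vanishes so does f, hence m = 1), so it is a unit of T''(X)
   and M is not proper.  Conversely the ideals {h | h x = 0} are maximal
   for any space X, hence every f in
   M(a) vanishes on Z(a).  With this description both
   implications are immediate: Z(f) = Z(g) puts f in M(g), and f in M(a)
   has the same zero set as f a, which lies in I. *)

Section Tpp_ring.
Set Implicit Arguments.
Unset Strict Implicit.
Variables (R : realType) (X : topologicalType).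
Implicit Types f g h : X -> R.

Lemma cozero_set_open (U : set X) : cozero_set R X U -> open U.
Proof.
move=> [g [cg ->]].
apply: (@open_comp _ _ g [set r : R | r != 0]); last exact: open_neq.
by move=> x _; exact: cg.
Qed.

Lemma cozero_setI (U V : set X) :
  cozero_set R X U -> cozero_set R X V -> cozero_set R X (U `&` V).
Proof.
move=> [g1 [cg1 ->]] [g2 [cg2 ->]].
exists (g1 \* g2); split; first by move=> x; apply: cvgM; [exact: cg1|exact: cg2].
by apply/seteqP; split=> x /=; rewrite mulf_eq0 negb_or => /andP.
Qed.

Lemma TppP f :
  Tpp R X f <->
  exists U, [/\ cozero_set R X U, dense U & forall x, U x -> {for x, continuous f}].
Proof.
split=> [[U [cU [dU cf]]]|[U [cU dU cf]]]; exists U.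
  move: cf; rewrite continuous_open_subspace; last exact: cozero_set_open.
  by split=> // x Ux; apply: cf; rewrite inE.
do 2!split => //; rewrite continuous_open_subspace; last exact: cozero_set_open.
by move=> x; rewrite inE; exact: cf.
Qed.

Lemma Tpp_lift2 f g h :
  (forall x, {for x, continuous f} -> {for x, continuous g} ->
             {for x, continuous h}) ->
  Tpp R X f -> Tpp R X g -> Tpp R X h.
Proof.
move=> fgh /TppP[U [cU dU cf]] /TppP[V [cV dV cg]].
apply/TppP; exists (U `&` V); split; first exact: cozero_setI.
  by apply: denseI => //; exact: cozero_set_open.
by move=> x [Ux Vx]; apply: fgh; [exact: cf|exact: cg].
Qed.

Lemma Tpp_cst (c : R) : Tpp R X (fun=> c).
Proof.
apply/TppP; exists setT; split=> [||x _]; last exact: cst_continuous.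
- exists (fun=> 1); split; first exact: cst_continuous.
  by apply/seteqP; split=> x //= _; exact: oner_neq0.
- by move=> O [x Ox] _; exists x.
Qed.

Lemma Tpp_add f g : Tpp R X f -> Tpp R X g -> Tpp R X (f \+ g).
Proof. by apply: Tpp_lift2 => x cf cg; apply: cvgD. Qed.

Lemma Tpp_sub f g : Tpp R X f -> Tpp R X g -> Tpp R X (f \- g).
Proof. by apply: Tpp_lift2 => x cf cg; apply: cvgB. Qed.

Lemma Tpp_mul f g : Tpp R X f -> Tpp R X g -> Tpp R X (f \* g).
Proof. by apply: Tpp_lift2 => x cf cg; apply: cvgM. Qed.

Lemma Tpp_inv f : (forall x, f x != 0) -> Tpp R X f -> Tpp R X (fun x => (f x)^-1).
Proof.
by move=> f_neq0 Tf; apply: (@Tpp_lift2 f f _ _ Tf Tf) => x cf _; exact: cvgV.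
Qed.

Lemma Zset_mul f g : Zset (f \* g) = Zset f `|` Zset g.
Proof.
apply/seteqP; split=> x; rewrite /Zset /=; last by case=> ->; rewrite ?mul0r ?mulr0.
by move/eqP; rewrite mulf_eq0 => /orP[]/eqP; [left|right].
Qed.

Section Ideal.
Variable I : set (X -> R).
Hypothesis idealI : is_ideal I.

Lemma ideal_Tpp f : I f -> Tpp R X f.
Proof. by case: idealI => + _ _ _; apply. Qed.

Lemma ideal_add f g : I f -> I g -> I (f \+ g).
Proof.
case: idealI => _ I0 Isub _ If Ig; have := Isub _ _ If (Isub _ _ I0 Ig).
by congr I; apply: funext => x; rewrite sub0r opprK.
Qed.

Lemma ideal_mul f g : Tpp R X f -> I g -> I (f \* g).
Proof. by case: idealI => _ _ _; apply. Qed.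

Lemma ideal_eq_Tpp h : I h -> (forall x, h x != 0) -> I = Tpp R X.
Proof.
move=> Ih h_neq0; apply/seteqP; split=> [f|f Tf]; first exact: ideal_Tpp.
have I1 : I (fun=> 1).
  have := ideal_mul (Tpp_inv h_neq0 (ideal_Tpp Ih)) Ih.
  by congr I; apply: funext => x; rewrite /= mulVf.
by have := ideal_mul Tf I1; congr I; apply: funext => x; rewrite /= mulr1.
Qed.

End Ideal.

Definition point_ideal (x : X) : set (X -> R) := [set h | Tpp R X h /\ h x = 0].

Lemma maximal_point_ideal x : maximal_ideal (point_ideal x).
Proof.
split.
- split=> [h []//||f g [Tf fx0] [Tg gx0]|f g Tf [Tg gx0]]; split=> //=.
  + exact: Tpp_cst.
  + exact: Tpp_sub.
  + by rewrite fx0 gx0 subr0.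
  + exact: Tpp_mul.
  + by rewrite gx0 mulr0.
- move=> E; have := Tpp_cst 1; rewrite -E => -[_ /eqP].
  by rewrite oner_eq0.
- move=> J idealJ subJ.
  have [[h [Jh hx_neq0]]|Jx] := pselect (exists h, J h /\ h x != 0).
    right; apply/seteqP; split=> [k|k Tk]; first exact: ideal_Tpp.
    pose c := k x / h x.
    have Jk_ch : J (k \- (fun=> c) \* h).
      apply: subJ; split; last by rewrite /= /c mulfVK // subrr.
      by apply: Tpp_sub => //; apply: Tpp_mul; [exact: Tpp_cst|exact: ideal_Tpp Jh].
    have := ideal_add idealJ Jk_ch (ideal_mul idealJ (Tpp_cst c) Jh).
    by congr J; apply: funext => y; rewrite /= subrK.
  left; apply/seteqP; split=> // h Jh; split; first exact: ideal_Tpp Jh.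
  by apply/eqP; apply: contra_notT Jx => hx_neq0; exists h.
Qed.

Definition ideal_adjoin (M : set (X -> R)) f : set (X -> R) :=
  [set t | exists m r, [/\ M m, Tpp R X r & t = m \+ r \* f]].

Lemma ideal_adjoin_ideal M f : is_ideal M -> Tpp R X f -> is_ideal (ideal_adjoin M f).
Proof.
move=> idealM Tf; have [MT M0 Msub Mmul] := idealM.
split.
- by move=> _ [m [r [Mm Tr ->]]]; apply: Tpp_add; [exact: MT|exact: Tpp_mul].
- exists (fun=> 0), (fun=> 0); split=> //; first exact: Tpp_cst.
  by apply: funext => x; rewrite /= mul0r addr0.
- move=> _ _ [m1 [r1 [M1 T1 ->]]] [m2 [r2 [M2 T2 ->]]].
  exists (m1 \- m2), (r1 \- r2); split; [exact: Msub|exact: Tpp_sub|].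
  by apply: funext => x /=; rewrite mulrBl opprD addrACA.
- move=> k _ Tk [m [r [Mm Tr ->]]].
  exists (k \* m), (k \* r); split; [exact: Mmul|exact: Tpp_mul|].
  by apply: funext => x /=; rewrite mulrDr mulrA.
Qed.

Lemma maximal_ideal_comaximal M f :
  maximal_ideal M -> Tpp R X f -> ~ M f ->
  exists m r, [/\ M m, Tpp R X r & forall x, m x + r x * f x = 1].
Proof.
move=> [idealM _ maxM] Tf Mf.
have subM : M `<=` ideal_adjoin M f.
  move=> m Mm; exists m, (fun=> 0); split=> //; first exact: Tpp_cst.
  by apply: funext => x; rewrite /= mul0r addr0.
have [adjE|adjE] := maxM _ (ideal_adjoin_ideal idealM Tf) subM.
  case: Mf; rewrite -adjE; exists (fun=> 0), (fun=> 1).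
  by split; [case: idealM|exact: Tpp_cst|apply: funext => x; rewrite /= add0r mul1r].
have [m [r [Mm Tr E1]]] : ideal_adjoin M f (fun=> 1) by rewrite adjE; exact: Tpp_cst.
by exists m, r; split=> // x; rewrite (congr1 (@^~ x) E1).
Qed.

Lemma Mset_Zset a : Tpp R X a ->
  Mset a = [set f | Tpp R X f /\ Zset a `<=` Zset f].
Proof.
move=> Ta; apply/seteqP; split=> f [Tf Mf]; split=> //.
  by move=> x ax0; have [] := Mf _ (maximal_point_ideal x) (conj Ta ax0).
move=> M maxM Ma; apply: contrapT => nMf.
have [m [r [Mm Tr mrf1]]] := maximal_ideal_comaximal maxM Tf nMf.
have idealM : is_ideal M by case: maxM.
have Mh : M (m \* m \+ a \* a).
  by apply: (ideal_add idealM); apply: ideal_mul => //; exact: ideal_Tpp Mm.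
suff h_neq0 : forall x, m x * m x + a x * a x != 0.
  by case: maxM => _ + _; apply; exact: ideal_eq_Tpp Mh h_neq0.
move=> x; rewrite -!expr2 paddr_eq0 ?sqr_ge0 // !sqrf_eq0.
apply/nandP; case: (eqVneq (a x) 0) => [ax0|]; last by right.
left; have := mrf1 x; rewrite (Mf x ax0) mulr0 addr0 => ->.
exact: oner_neq0.
Qed.

End Tpp_ring.

Theorem theorem5p01 (R : realType) (X : topologicalType)
  (hT1 : @accessible_space X) (I : set (X -> R)) (hI : is_ideal I) :
  z_ideal I <->
  (forall f g : X -> R, Tpp R X f -> I g -> Zset f = Zset g -> I f).
Proof.
split=> [zI f g Tf Ig Zfg|ZI a Ia f].
  apply: (zI g Ig); rewrite (Mset_Zset (ideal_Tpp hI Ig)).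
  by split; rewrite ?Zfg.
rewrite (Mset_Zset (ideal_Tpp hI Ia)) => -[Tf Zaf].
apply: (ZI f (f \* a) Tf); first exact: (ideal_mul hI Tf Ia).
by rewrite Zset_mul; apply/esym/setUidPl.
Qed.
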